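(* Let $L=\langle S,A,\to\rangle$ be a labelled transition system. For all $x,y\in\{o,b\}$, the relation $\mathrel{\underline{\leftrightarrow}}^{ed}_{(x,y)}$ ($(x,y)$-generic bisimilarity with explicit divergence) coincides with the relation $\equiv^{ed}_{E(x,y)}$ (winning for Duplicator in the $E(x,y)$-generic bisimulation game with explicit divergence).
   Context: A labelled transition system (LTS) is $L=\langle S,A,\to\rangle$ with $S$ a set of states, $A$ a set of actions containing a special internal action $\tau$, and $\to\subseteq S\times A\times S$; write $s\xrightarrow{a}t$. Let $\twoheadrightarrow$ be the reflexive-transitive closure and $\twoheadrightarrow^+$ the transitive closure of $\xrightarrow{\tau}$. For $R\subseteq S\times S$ and $s,s',t\in S$: $s\twoheadrightarrow_{o,R,t}s'$ iff $s\twoheadrightarrow s'$; $s\twoheadrightarrow_{b,R,t}s'$ iff $s\twoheadrightarrow s'$, $t\,R\,s$ and $t\,R\,s'$. For $x,y\in\{o,b\}$, a symmetric $R\subseteq S\times S$ is an $(x,y)$-generic bisimulation if whenever $s\,R\,t$ and $s\xrightarrow{a}s'$, either $a=\tau$ and $s'\,R\,t$, or there are $t',t_1,t_2$ with $t\twoheadrightarrow_{x,R,s}t_1\xrightarrow{a}t_2\twoheadrightarrow_{y,R,s'}t'$ and $s'\,R\,t'$. A symmetric $R$ is an $(x,y)$-generic bisimulation with explicit divergence if it is an $(x,y)$-generic bisimulation and for all $s\,R\,t$, if there is an infinite sequence $s=s_0\xrightarrow{\tau}s_1\xrightarrow{\tau}s_2\cdots$, then there are a state $t'$ with $t\twoheadrightarrow^+t'$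 and some $k$ with $s_k\,R\,t'$. Write $s\mathrel{\underline{\leftrightarrow}}^{ed}_{(x,y)}t$ iff some such $R$ relates $s$ and $t$. Game with explicit divergence. Let $\frown,\smile$ be formal tags and $E\subseteq\{\frown,\smile\}$. The game is played by Spoiler and Duplicator on Spoiler-owned configurations $\langle (s,t),c,m,r\rangle_S$ and Duplicator-owned $\langle (s,t),c,m,r\rangle_D$, with $(s,t)\in S\times S$, $c\in (A\times S)\cup\{\dagger\}$, $m\in (S\times\{\frown,\smile\})\cup\{\dagger\}$, $r\in\{*,\checkmark\}$. From $\langle (s,t),c,m,r\rangle_S$ Spoiler may: (S1) move to $\langle (s,t),c,m,*\rangle_D$ if $c\neq\dagger$; (S2a) for some $s\xrightarrow{a}s'$, move to $\langle (s,t),(a,s'),(t,\frown),*\rangle_D$ if $c=\dagger$; (S2b) for some $s\xrightarrow{a}s'$, move to $\langle (s,t),(a,s'),(t,\frown),\checkmark\rangle_D$ if $c\neq (a,s')$; (S3) for some $t\xrightarrow{a}t'$, move to $\langle (t,s),(a,t'),(s,\frown),\checkmark\rangle_D$. From $\langle (u,v),(a,u'),(\bar v,f),r\rangle_D$ Duplicator may: (D1) move to $\langle (u',\bar v),\dagger,\dagger,*\rangle_S$ if $a=\tau$; (D2) if $f=\frown$ and $\bar v\xrightarrow{a}v'$: (a) move to $\langle (u',v'),(a,u'),(v',\smile),*\rangle_S$, or (b) move to $\langle (u',v'),\dagger,\dagger,\checkmark\rangle_S$, or (c) only if $\smile\in E$, move to $\langle (u,v),(a,u'),(v',\smile),*\rangle_S$;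 (D3) for some $\bar v\xrightarrow{\tau}v'$: (a) move to $\langle (u,v'),(a,u'),(v',f),*\rangle_S$, or (b) only if $f=\smile$, move to $\langle (u',v'),\dagger,\dagger,\checkmark\rangle_S$, or (c) only if $f\in E$, move to $\langle (u,v),(a,u'),(v',f),*\rangle_S$. Duplicator wins a finite play if Spoiler gets stuck, and an infinite play if it contains infinitely many $\checkmark$ rewards; all other plays are won by Spoiler. Write $s\equiv^{ed}_E t$ iff Duplicator has a strategy winning all plays from $\langle (s,t),\dagger,\dagger,*\rangle_S$. $E(x,y)$ is the smallest set with $\frown\in E(o,y)$ and $\smile\in E(x,o)$ for all $x,y\in\{o,b\}$. *)

From Stdlib Require Import List Relations Arith.
Import ListNotations.

Inductive Mode := o | b.
Inductive Tag := Frown | Smile.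
Inductive Owner := Spoiler | Duplicator.

Definition Exy (x y : Mode) (f : Tag) : Prop :=
  match f with Frown => x = o | Smile => y = o end.

Section LTS.
Variables (St A : Type) (tau : A) (step : St -> A -> St -> Prop).

Definition tstep (s s' : St) : Prop := step s tau s'.
Definition taus : St -> St -> Prop := clos_refl_trans_1n St tstep.
Definition taus_plus : St -> St -> Prop := clos_trans_1n St tstep.

Definition gtaus (x : Mode) (R : St -> St -> Prop) (t s s' : St) : Prop :=
  match x with
  | o => taus s s'
  | b => taus s s' /\ R t s /\ R t s'
  end.

Definition symmetric_rel (R : St -> St -> Prop) : Prop :=
  forall s t, R s t -> R t s.

Definition generic_bisim (x y : Mode) (R : St -> St -> Prop) : Prop :=
  symmetric_rel R /\
  forall s t a s', R s t -> step s a s' ->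
    (a = tau /\ R s' t) \/
    (exists t' t1 t2, gtaus x R s t t1 /\ step t1 a t2 /\
                      gtaus y R s' t2 t' /\ R s' t').

Definition generic_bisim_ed (x y : Mode) (R : St -> St -> Prop) : Prop :=
  generic_bisim x y R /\
  forall s t, R s t ->
    forall f : nat -> St, f 0 = s -> (forall n, step (f n) tau (f (Datatypes.S n))) ->
      exists t' k, taus_plus t t' /\ R (f k) t'.

Definition bisimilar_ed (x y : Mode) (s t : St) : Prop :=
  exists R, generic_bisim_ed x y R /\ R s t.

(* c = None encodes dagger, m = None encodes dagger; rw = false encodes *,
   rw = true encodes the checkmark reward. *)
Record conf := mkConf {
  own : Owner; pos : St * St; cc : option (A * St); mm : option (St * Tag); rw : bool }.

Inductive move (E : Tag -> Prop) : conf -> conf -> Prop :=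
| mvS1 : forall p c m r, c <> None ->
    move E (mkConf Spoiler p c m r) (mkConf Duplicator p c m false)
| mvS2a : forall s t m r a s', step s a s' ->
    move E (mkConf Spoiler (s,t) None m r)
           (mkConf Duplicator (s,t) (Some (a,s')) (Some (t,Frown)) false)
| mvS2b : forall s t c m r a s', step s a s' -> c <> Some (a,s') ->
    move E (mkConf Spoiler (s,t) c m r)
           (mkConf Duplicator (s,t) (Some (a,s')) (Some (t,Frown)) true)
| mvS3 : forall s t c m r a t', step t a t' ->
    move E (mkConf Spoiler (s,t) c m r)
           (mkConf Duplicator (t,s) (Some (a,t')) (Some (s,Frown)) true)
| mvD1 : forall u v u' vb f r,
    move E (mkConf Duplicator (u,v) (Some (tau,u')) (Some (vb,f)) r)
           (mkConf Spoiler (u',vb) None None false)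
| mvD2a : forall u v a u' vb r v', step vb a v' ->
    move E (mkConf Duplicator (u,v) (Some (a,u')) (Some (vb,Frown)) r)
           (mkConf Spoiler (u',v') (Some (a,u')) (Some (v',Smile)) false)
| mvD2b : forall u v a u' vb r v', step vb a v' ->
    move E (mkConf Duplicator (u,v) (Some (a,u')) (Some (vb,Frown)) r)
           (mkConf Spoiler (u',v') None None true)
| mvD2c : forall u v a u' vb r v', step vb a v' -> E Smile ->
    move E (mkConf Duplicator (u,v) (Some (a,u')) (Some (vb,Frown)) r)
           (mkConf Spoiler (u,v) (Some (a,u')) (Some (v',Smile)) false)
| mvD3a : forall u v a u' vb f r v', step vb tau v' ->
    move E (mkConf Duplicator (u,v) (Some (a,u')) (Some (vb,f)) r)
           (mkConf Spoiler (u,v') (Some (a,u')) (Some (v',f)) false)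
| mvD3b : forall u v a u' vb r v', step vb tau v' ->
    move E (mkConf Duplicator (u,v) (Some (a,u')) (Some (vb,Smile)) r)
           (mkConf Spoiler (u',v') None None true)
| mvD3c : forall u v a u' vb f r v', step vb tau v' -> E f ->
    move E (mkConf Duplicator (u,v) (Some (a,u')) (Some (vb,f)) r)
           (mkConf Spoiler (u,v) (Some (a,u')) (Some (v',f)) false).

(* A (history-dependent) Duplicator strategy maps the history of the play
   (oldest first, current configuration last) to the next configuration. *)
Definition strategy := list conf -> conf.

Definition valid_strategy (E : Tag -> Prop) (sigma : strategy) : Prop :=
  forall h c, own c = Duplicator -> (exists c', move E c c') ->
    move E c (sigma (h ++ [c])).

Definition hist (p : nat -> conf) (n : nat) : list conf := map p (seq 0 (Datatypes.S n)).

Definition winning_from (E : Tag -> Prop) (sigma : strategy) (c0 : conf) : Prop :=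
  (forall p : nat -> conf, p 0 = c0 ->
     (forall n, move E (p n) (p (Datatypes.S n))) ->
     (forall n, own (p n) = Duplicator -> p (Datatypes.S n) = sigma (hist p n)) ->
     forall N, exists n, N <= n /\ rw (p n) = true)
  /\
  (forall (p : nat -> conf) (k : nat), p 0 = c0 ->
     (forall n, n < k -> move E (p n) (p (Datatypes.S n))) ->
     (forall n, n < k -> own (p n) = Duplicator -> p (Datatypes.S n) = sigma (hist p n)) ->
     (forall c', ~ move E (p k) c') ->
     own (p k) = Spoiler).

Definition game_equiv_ed (E : Tag -> Prop) (s t : St) : Prop :=
  exists sigma, valid_strategy E sigma /\
    winning_from E sigma (mkConf Spoiler (s,t) None None false).

End LTS.

From Stdlib Require Import List Relations Arith Lia Wf_nat Classical ClassicalEpsilon.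
Import ListNotations.

(* Duplicator's strategy is read off from the largest semi-branching bisimulation with
   explicit divergence, which contains every generic one and is closed under stuttering.
   Duplicator always answers along a shortest matching path, so each unrewarded answer
   shortens it; after the last reward only silent challenges answered by standing still
   remain, and explicit divergence yields a matching move Duplicator would have preferred.
   Conversely, relate s and t when Duplicator wins from a Spoiler configuration at (s,t)
   that ends a round. This is a bisimulation with explicit divergence: Spoiler can repeat a
   challenge, or follow a divergence, forever without granting rewards, so a winning
   Duplicator must eventually complete the required transfer. *)

Section GenericBisimulationGame.
Variables (St A : Type) (tau : A) (step : St -> A -> St -> Prop).

Local Notation taus := (taus St A tau step).
Local Notation taus_plus := (taus_plus St A tau step).
Local Notation gtaus := (gtaus St A tau step).

Lemma taus_tau s s' : step s tau s' -> taus s s'.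
Proof. exact (clos_rt1n_step _ _ s s'). Qed.

Lemma taus_trans s1 s2 s3 : taus s1 s2 -> taus s2 s3 -> taus s1 s3.
Proof.
  intros H12 H23; apply clos_rt_rt1n.
  apply rt_trans with s2; apply clos_rt1n_rt; assumption.
Qed.

Lemma taus_plus_taus s s' : taus_plus s s' -> taus s s'.
Proof.
  induction 1 as [s s' H|s s1 s' H _ IH].
  - now apply taus_tau.
  - now econstructor; eauto.
Qed.

Lemma taus_eq_or_plus s s' : taus s s' -> s = s' \/ taus_plus s s'.
Proof.
  induction 1 as [|s s1 s' H _ [<-|IH]]; auto.
  - right; now constructor.
  - right; now econstructor 2; eauto.
Qed.

Lemma taus_taus_plus s1 s2 s3 : taus s1 s2 -> taus_plus s2 s3 -> taus_plus s1 s3.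
Proof.
  induction 1 as [|s s1 s2 H _ IH]; intros H23; auto.
  econstructor 2; [exact H|now apply IH].
Qed.

Lemma taus_plus_first s s' : taus_plus s s' -> exists s1, step s tau s1 /\ taus s1 s'.
Proof.
  destruct 1 as [? H|s1 ? H H'].
  - eexists; split; [exact H|constructor].
  - exists s1; split; [exact H|now apply taus_plus_taus].
Qed.

Lemma taus_plus_last s s' : taus_plus s s' -> exists s0, taus s s0 /\ step s0 tau s'.
Proof.
  induction 1 as [s s' H|s s1 s' H _ [s0 [H1 H2]]].
  - exists s; split; [constructor|exact H].
  - exists s0; split; [econstructor; eauto|exact H2].
Qed.

Fixpoint tau_path (s : St) (n : nat) (s' : St) : Prop :=
  match n with
  | 0 => s = s'
  | S n => exists s1, step s tau s1 /\ tau_path s1 n s'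
  end.

Lemma taus_tau_path s s' : taus s s' -> exists n, tau_path s n s'.
Proof.
  induction 1 as [|s s1 s' H _ [n Hn]].
  - now exists 0.
  - exists (S n); simpl; eauto.
Qed.

Lemma tau_path_taus n : forall s s', tau_path s n s' -> taus s s'.
Proof.
  induction n as [|n IH]; simpl.
  - intros s s' ->; constructor.
  - intros s s' [s1 [H1 H2]]; econstructor; [exact H1|eapply IH; eauto].
Qed.

Lemma taus_plus_tau_path s s' : taus_plus s s' -> exists n, tau_path s (S n) s'.
Proof.
  intros [s1 [H1 H2]]%taus_plus_first.
  destruct (taus_tau_path _ _ H2) as [n Hn]; exists n; simpl; eauto.
Qed.

Lemma least_nat (P : nat -> Prop) :
  (exists n, P n) -> exists n, P n /\ forall m, P m -> n <= m.
Proof.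
  intros HP.
  destruct (dec_inh_nat_subset_has_unique_least_element P (fun n => classic (P n)) HP)
    as [n [Hn _]].
  now exists n.
Qed.

Lemma gtaus_mono z (R R' : St -> St -> Prop) s t t' :
  (forall p q, R p q -> R' p q) -> gtaus z R s t t' -> gtaus z R' s t t'.
Proof. destruct z; simpl; intuition. Qed.

Lemma gtaus_taus z R s t t' : gtaus z R s t t' -> taus t t'.
Proof. destruct z; simpl; tauto. Qed.

Lemma gtaus_b z (R : St -> St -> Prop) s t t' : gtaus z R s t t' -> z = b -> R s t /\ R s t'.
Proof. intros H ->; simpl in H; tauto. Qed.

Lemma gtaus_intro z (R : St -> St -> Prop) s t t' :
  taus t t' -> (z = b -> R s t /\ R s t') -> gtaus z R s t t'.
Proof. destruct z; simpl; intuition. Qed.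

Lemma gtaus_taus_l z (R : St -> St -> Prop) s q t t' :
  R s q -> taus q t -> gtaus z R s t t' -> gtaus z R s q t'.
Proof.
  intros Hsq Hqt Ht; apply gtaus_intro.
  - exact (taus_trans _ _ _ Hqt (gtaus_taus _ _ _ _ _ Ht)).
  - intros Hz; split; [exact Hsq|exact (proj2 (gtaus_b _ _ _ _ _ Ht Hz))].
Qed.

(** * Semi-branching bisimulations *)

Definition sb_transfer x y (R : St -> St -> Prop) s t a s' : Prop :=
  (a = tau /\ exists t', taus t t' /\ R s t' /\ R s' t') \/
  (exists t1 t2 t', gtaus x R s t t1 /\ step t1 a t2 /\ gtaus y R s' t2 t' /\ R s' t').

Definition div_matched (R : St -> St -> Prop) s t : Prop :=
  forall f : nat -> St, f 0 = s -> (forall n, step (f n) tau (f (S n))) ->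
    exists t' k, taus_plus t t' /\ R (f k) t'.

Definition semibranching_ed x y (R : St -> St -> Prop) : Prop :=
  symmetric_rel St R /\
  (forall s t a s', R s t -> step s a s' -> sb_transfer x y R s t a s') /\
  (forall s t, R s t -> div_matched R s t).

Lemma sb_transfer_mono x y (R R' : St -> St -> Prop) s t a s' :
  (forall p q, R p q -> R' p q) -> sb_transfer x y R s t a s' -> sb_transfer x y R' s t a s'.
Proof.
  intros HR [[Ha [t' [H1 [H2 H3]]]]|[t1 [t2 [t' [H1 [H2 [H3 H4]]]]]]].
  - left; split; [exact Ha|exists t'; auto].
  - right; exists t1, t2, t'; repeat split; eauto using gtaus_mono.
Qed.

Lemma sb_transfer_taus_l x y (R : St -> St -> Prop) s q t a s' :
  R s q -> taus q t -> sb_transfer x y R s t a s' -> sb_transfer x y R s q a s'.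
Proof.
  intros Hsq Hqt [[Ha [t' [H1 H2]]]|[t1 [t2 [t' [H1 H2]]]]].
  - left; split; [exact Ha|exists t'; split; [eapply taus_trans; eauto|exact H2]].
  - right; exists t1, t2, t'; split; [eapply gtaus_taus_l; eauto|exact H2].
Qed.

Lemma div_matched_mono (R R' : St -> St -> Prop) s t :
  (forall p q, R p q -> R' p q) -> div_matched R s t -> div_matched R' s t.
Proof.
  intros HR Hd f Hf0 Hf; destruct (Hd f Hf0 Hf) as [t' [k [H1 H2]]]; eauto.
Qed.

Lemma div_matched_taus_l (R : St -> St -> Prop) s q t :
  taus q t -> div_matched R s t -> div_matched R s q.
Proof.
  intros Hqt Hd f Hf0 Hf; destruct (Hd f Hf0 Hf) as [t' [k [H1 H2]]].
  exists t', k; split; [eapply taus_taus_plus; eauto|exact H2].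
Qed.

Lemma generic_bisim_ed_semibranching x y R :
  generic_bisim_ed St A tau step x y R -> semibranching_ed x y R.
Proof.
  intros [[Hsym Ht] Hd]; split; [exact Hsym|split; [|exact Hd]].
  intros s t a s' Hst Hs.
  destruct (Ht _ _ _ _ Hst Hs) as [[Ha H]|[t' [t1 [t2 H]]]].
  - left; split; [exact Ha|exists t; repeat split; auto; constructor].
  - right; exists t1, t2, t'; exact H.
Qed.

Definition sb_bisimilar x y s t : Prop := exists R, semibranching_ed x y R /\ R s t.

Lemma semibranching_sb_bisimilar x y : semibranching_ed x y (sb_bisimilar x y).
Proof.
  split; [|split].
  - intros s t [R [HR Hst]]; exists R; split; [exact HR|now apply (proj1 HR)].
  - intros s t a s' [R [HR Hst]] Hs.
    apply sb_transfer_mono with R; [intros p q Hpq; now exists R|].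
    exact (proj1 (proj2 HR) _ _ _ _ Hst Hs).
  - intros s t [R [HR Hst]].
    apply div_matched_mono with R; [intros p q Hpq; now exists R|].
    exact (proj2 (proj2 HR) _ _ Hst).
Qed.

Lemma semibranching_taus x y R s t s' :
  semibranching_ed x y R -> R s t -> taus s s' -> exists t', taus t t' /\ R s' t'.
Proof.
  intros [_ [Ht _]] Hst Hs; revert t Hst.
  induction Hs as [s|s s1 s' Hs _ IH]; intros t Hst.
  - exists t; split; [constructor|exact Hst].
  - destruct (Ht _ _ _ _ Hst Hs) as [[_ [t1 [H1 [_ H2]]]]|[t1 [t2 [t1' [H1 [H2 [H3 H4]]]]]]].
    + destruct (IH _ H2) as [t' [H3 H4]].
      exists t'; split; [eapply taus_trans; eauto|exact H4].
    + destruct (IH _ H4) as [t' [H5 H6]].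
      exists t'; split; [|exact H6].
      apply taus_trans with t1; [exact (gtaus_taus _ _ _ _ _ H1)|].
      econstructor; [exact H2|].
      exact (taus_trans _ _ _ (gtaus_taus _ _ _ _ _ H3) H5).
Qed.

(** The silent case of [sb_transfer] lets the matching state move silently, which is what
    keeps semi-branching bisimulations closed under stuttering. *)
Definition stutter (R : St -> St -> Prop) u w : Prop :=
  exists t0 tn, R u t0 /\ R u tn /\ taus t0 w /\ taus w tn.

Definition stutter_closure (R : St -> St -> Prop) p q : Prop :=
  R p q \/ stutter R p q \/ stutter R q p.

Lemma stutter_closure_reach x y R p q :
  semibranching_ed x y R -> stutter_closure R p q -> exists r, taus q r /\ R p r.
Proof.
  intros HR [H|[[t0 [tn [_ [H [_ Hq]]]]]|[t0 [tn [H1 [_ [H2 _]]]]]]].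
  - exists q; split; [constructor|exact H].
  - now exists tn.
  - exact (semibranching_taus _ _ _ _ _ _ HR (proj1 HR _ _ H1) H2).
Qed.

Lemma semibranching_stutter_closure x y R :
  semibranching_ed x y R -> semibranching_ed x y (stutter_closure R).
Proof.
  intros HR.
  assert (Hincl : forall p q, R p q -> stutter_closure R p q) by (now left).
  split; [|split].
  - intros p q [H|[H|H]]; [left; exact (proj1 HR _ _ H)|right; now right|right; now left].
  - intros p q a p' Hpq Hp.
    destruct (stutter_closure_reach _ _ _ _ _ HR Hpq) as [r [Hqr Hpr]].
    apply sb_transfer_taus_l with r; [exact Hpq|exact Hqr|].
    exact (sb_transfer_mono _ _ _ _ _ _ _ _ Hincl (proj1 (proj2 HR) _ _ _ _ Hpr Hp)).
  - intros p q Hpq.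
    destruct (stutter_closure_reach _ _ _ _ _ HR Hpq) as [r [Hqr Hpr]].
    apply div_matched_taus_l with r; [exact Hqr|].
    exact (div_matched_mono _ _ _ _ Hincl (proj2 (proj2 HR) _ _ Hpr)).
Qed.

Lemma sb_bisimilar_stutter x y u t0 w tn :
  sb_bisimilar x y u t0 -> sb_bisimilar x y u tn -> taus t0 w -> taus w tn ->
  sb_bisimilar x y u w.
Proof.
  intros H0 Hn Hw0 Hwn.
  exists (stutter_closure (sb_bisimilar x y)); split.
  - exact (semibranching_stutter_closure _ _ _ (semibranching_sb_bisimilar x y)).
  - right; left; now exists t0, tn.
Qed.

(** * Duplicator's strategy from a bisimulation *)

Local Notation conf := (conf St A).
Local Notation mkC := (mkConf St A).

Lemma hist_snoc (p : nat -> conf) n : hist St A p n = map p (seq 0 n) ++ [p n].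
Proof. unfold hist; now rewrite seq_S, map_app. Qed.

Lemma spoiler_unrewarded_move E (c c' : conf) :
  move St A tau step E c c' -> own St A c = Spoiler -> rw St A c' = false ->
  (cc St A c <> None /\ c' = mkC Duplicator (pos St A c) (cc St A c) (mm St A c) false) \/
  (cc St A c = None /\ exists a s', step (fst (pos St A c)) a s' /\
     c' = mkC Duplicator (pos St A c) (Some (a,s')) (Some (snd (pos St A c), Frown)) false).
Proof. destruct 1; simpl; try discriminate; auto; right; eauto. Qed.

Section Forward.
Variables x y : Mode.
Local Notation B := (sb_bisimilar x y).
Local Notation mv := (move St A tau step (Exy x y)).

Lemma sb_bisimilar_sym s t : B s t -> B t s.
Proof. apply (proj1 (semibranching_sb_bisimilar x y)). Qed.

(** [n] counts the silent steps left before matching [a]; Duplicator always picks the least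
    [n], so every unrewarded answer decreases it. *)
Definition frown_answer u a u' v n : Prop :=
  exists t1 t2, tau_path v n t1 /\ step t1 a t2 /\ (x = b -> B u t1) /\
    exists t', taus t2 t' /\ B u' t' /\ (y = b -> B u' t2).

Definition smile_answer u' v n : Prop := exists t', tau_path v (S n) t' /\ B u' t'.

Lemma frown_answer_zero u a u' v :
  frown_answer u a u' v 0 ->
  exists t2, step v a t2 /\ (B u' t2 \/ (y = o /\ exists k, smile_answer u' t2 k)).
Proof.
  intros [t1 [t2 [<- [H2 [_ [t' [H3 [H4 H5]]]]]]]].
  exists t2; split; [exact H2|].
  assert (Hy : y = o \/ y = b) by (destruct y; auto).
  destruct Hy as [Hy|Hy]; [|left; exact (H5 Hy)].
  destruct (taus_eq_or_plus _ _ H3) as [<-|Ht]; [now left|right; split; [exact Hy|]].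
  destruct (taus_plus_tau_path _ _ Ht) as [k Hk]; exists k, t'; auto.
Qed.

Lemma frown_answer_succ u a u' v m :
  frown_answer u a u' v (S m) -> exists v', step v tau v' /\ frown_answer u a u' v' m.
Proof.
  intros [t1 [t2 [[v' [H0 H1]] H2]]]; exists v'; split; [exact H0|exists t1, t2; auto].
Qed.

Lemma smile_answer_zero u' v : smile_answer u' v 0 -> exists t', step v tau t' /\ B u' t'.
Proof. intros [t' [[v1 [H1 <-]] H2]]; eauto. Qed.

Lemma smile_answer_succ u' v m :
  smile_answer u' v (S m) -> exists v', step v tau v' /\ smile_answer u' v' m.
Proof. intros [t' [[v' [H0 H1]] H2]]; exists v'; split; [exact H0|exists t'; auto]. Qed.

Lemma frown_answer_or_stay s t a s' :
  B s t -> step s a s' -> (exists n, frown_answer s a s' t n) \/ (a = tau /\ B s' t).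
Proof.
  intros Hst Hs.
  destruct (proj1 (proj2 (semibranching_sb_bisimilar x y)) _ _ _ _ Hst Hs)
    as [[Ha [t' [H1 [H2 H3]]]]|[t1 [t2 [t' [H1 [H2 [H3 H4]]]]]]].
  - destruct (taus_eq_or_plus _ _ H1) as [<-|Ht]; [now right|left].
    destruct (taus_plus_last _ _ Ht) as [t1 [H4 H5]].
    destruct (taus_tau_path _ _ H4) as [n Hn].
    subst a; exists n, t1, t'; repeat split; auto.
    + intros _; apply sb_bisimilar_stutter with t t'; auto using taus_tau.
    + exists t'; repeat split; auto; constructor.
  - left; destruct (taus_tau_path _ _ (gtaus_taus _ _ _ _ _ H1)) as [n Hn].
    exists n, t1, t2; repeat split; auto.
    + intros Hx; exact (proj2 (gtaus_b _ _ _ _ _ H1 Hx)).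
    + exists t'; repeat split; auto; [exact (gtaus_taus _ _ _ _ _ H3)|].
      intros Hy; exact (proj1 (gtaus_b _ _ _ _ _ H3 Hy)).
Qed.

Definition frown_response u v a u' vb (d' : conf) : Prop :=
  (exists n, frown_answer u a u' vb n /\ (forall m, frown_answer u a u' vb m -> n <= m) /\
    ((n = 0 /\ exists t2, step vb a t2 /\ B u' t2 /\
        d' = mkC Spoiler (u',t2) None None true) \/
     (n = 0 /\ y = o /\ exists t2, step vb a t2 /\ (exists k, smile_answer u' t2 k) /\
        d' = mkC Spoiler (u,v) (Some (a,u')) (Some (t2,Smile)) false) \/
     (exists m v', n = S m /\ step vb tau v' /\ frown_answer u a u' v' m /\
        ((x = b /\ d' = mkC Spoiler (u,v') (Some (a,u')) (Some (v',Frown)) false) \/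
         (x = o /\ d' = mkC Spoiler (u,v) (Some (a,u')) (Some (v',Frown)) false)))))
  \/ ((~ exists n, frown_answer u a u' vb n) /\ a = tau /\
      d' = mkC Spoiler (u',vb) None None false).

Definition smile_response u v a u' vb (d' : conf) : Prop :=
  exists n, smile_answer u' vb n /\ (forall m, smile_answer u' vb m -> n <= m) /\
    ((n = 0 /\ exists t', step vb tau t' /\ B u' t' /\
        d' = mkC Spoiler (u',t') None None true) \/
     (exists m v', n = S m /\ y = o /\ step vb tau v' /\ smile_answer u' v' m /\
        d' = mkC Spoiler (u,v) (Some (a,u')) (Some (v',Smile)) false)).

Definition dup_response (d d' : conf) : Prop :=
  match d with
  | mkConf _ _ Duplicator (u,v) (Some (a,u')) (Some (vb,Frown)) _ =>
      frown_response u v a u' vb d'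
  | mkConf _ _ Duplicator (u,v) (Some (a,u')) (Some (vb,Smile)) _ =>
      smile_response u v a u' vb d'
  | _ => False
  end.

Definition dup_inv (d : conf) : Prop :=
  match d with
  | mkConf _ _ Duplicator (u,v) (Some (a,u')) (Some (vb,Frown)) _ =>
      B u v /\ (x = b -> B u vb) /\
      ((exists n, frown_answer u a u' vb n) \/ (a = tau /\ B u' vb))
  | mkConf _ _ Duplicator (u,v) (Some (a,u')) (Some (vb,Smile)) _ =>
      B u v /\ y = o /\ exists n, smile_answer u' vb n
  | _ => False
  end.

Definition play_inv (c : conf) : Prop :=
  match c with
  | mkConf _ _ Spoiler (u,v) cc mm _ =>
      B u v /\ match cc with
               | None => True
               | Some _ => dup_inv (mkC Duplicator (u,v) cc mm false)
               end
  | mkConf _ _ Duplicator _ _ _ _ => dup_inv c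
  end.

Lemma play_inv_dup_inv c : own St A c = Duplicator -> play_inv c -> dup_inv c.
Proof. destruct c as [[|] ? ? ? ?]; simpl; [discriminate|auto]. Qed.

Lemma dup_response_move d d' : dup_response d d' -> mv d d'.
Proof.
  destruct d as [[|] [u v] [[a u']|] [[vb [|]]|] r]; simpl; try tauto.
  - intros [[n [_ [_ Hn]]]|[_ [-> ->]]]; [|apply mvD1].
    destruct Hn as [[_ [t2 [H1 [_ ->]]]]|[[_ [Hy [t2 [H1 [_ ->]]]]]|
                    [m [v' [_ [H1 [_ [[_ ->]|[Hx ->]]]]]]]]].
    + now apply mvD2b.
    + now apply mvD2c.
    + now apply mvD3a.
    + now apply mvD3c.
  - intros [n [_ [_ [[_ [t' [H1 [_ ->]]]]|[m [v' [_ [Hy [H1 [_ ->]]]]]]]]]].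
    + now apply mvD3b.
    + now apply mvD3c.
Qed.

Lemma frown_response_exists u v a u' vb :
  (exists n, frown_answer u a u' vb n) \/ (a = tau /\ B u' vb) ->
  exists d', frown_response u v a u' vb d'.
Proof.
  intros Hans.
  destruct (classic (exists n, frown_answer u a u' vb n)) as [Hex|Hnone].
  - destruct (least_nat _ Hex) as [[|m] [Hn Hmin]].
    + destruct (frown_answer_zero _ _ _ _ Hn) as [t2 [Ht2 [HB|[Hy Hk]]]].
      * exists (mkC Spoiler (u',t2) None None true); left; exists 0.
        split; [exact Hn|split; [exact Hmin|left; split; [reflexivity|eauto]]].
      * exists (mkC Spoiler (u,v) (Some (a,u')) (Some (t2,Smile)) false); left; exists 0.
        split; [exact Hn|split; [exact Hmin|right; left; split; [reflexivity|eauto]]].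
    + destruct (frown_answer_succ _ _ _ _ _ Hn) as [v' [Hv' Hm]].
      assert (Hx : x = b \/ x = o) by (destruct x; auto).
      destruct Hx as [Hx|Hx];
        [exists (mkC Spoiler (u,v') (Some (a,u')) (Some (v',Frown)) false)
        |exists (mkC Spoiler (u,v) (Some (a,u')) (Some (v',Frown)) false)];
        left; exists (S m); (split; [exact Hn|split; [exact Hmin|right; right]]);
        exists m, v'; repeat split; auto.
  - destruct Hans as [Hex|[Ha HB]]; [contradiction|].
    eexists; right; split; [exact Hnone|split; [exact Ha|reflexivity]].
Qed.

Lemma smile_response_exists u v a u' vb :
  y = o -> (exists n, smile_answer u' vb n) -> exists d', smile_response u v a u' vb d'.
Proof.
  intros Hy Hex.
  destruct (least_nat _ Hex) as [[|m] [Hn Hmin]].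
  - destruct (smile_answer_zero _ _ Hn) as [t' [H1 H2]].
    eexists; exists 0; split; [exact Hn|split; [exact Hmin|]].
    left; split; [reflexivity|exists t'; repeat split; eauto].
  - destruct (smile_answer_succ _ _ _ Hn) as [v' [H1 H2]].
    eexists; exists (S m); split; [exact Hn|split; [exact Hmin|]].
    right; exists m, v'; repeat split; eauto.
Qed.

Lemma dup_response_exists d : dup_inv d -> exists d', dup_response d d'.
Proof.
  destruct d as [[|] [u v] [[a u']|] [[vb [|]]|] r]; simpl; try tauto.
  - intros [_ [_ H]]; now apply frown_response_exists.
  - intros [_ [Hy H]]; now apply smile_response_exists.
Qed.

Lemma play_inv_spoiler_move c c' : play_inv c -> own St A c = Spoiler -> mv c c' -> play_inv c'.
Proof.
  intros Hc Ho Hm; destruct Hm as [[u v] c0 m r Hc0| | | | | | | | | | ]; simpl in *;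
    try discriminate.
  - destruct c0 as [c0|]; [exact (proj2 Hc)|congruence].
  - destruct Hc as [Hst _]; repeat split; auto using frown_answer_or_stay.
  - destruct Hc as [Hst _]; repeat split; auto using frown_answer_or_stay.
  - destruct Hc as [Hst _]; repeat split; auto using frown_answer_or_stay, sb_bisimilar_sym.
Qed.

Lemma play_inv_dup_response d d' : dup_inv d -> dup_response d d' -> play_inv d'.
Proof.
  destruct d as [[|] [u v] [[a u']|] [[vb [|]]|] r]; simpl; try tauto.
  - intros [Huv [Hvb Hans]] [[n [_ [_ Hd']]]|[Hnone [_ ->]]].
    + destruct Hd' as [[_ [t2 [_ [HB ->]]]]|[[_ [Hy [t2 [_ [Hk ->]]]]]|
                       [m [v' [_ [Hv' [Hm [[Hx ->]|[Hx ->]]]]]]]]]; simpl.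
      * now split.
      * repeat split; auto.
      * assert (Huv' : B u v').
        { destruct Hm as [t1 [t2 [Hp [_ [Ht1 _]]]]].
          apply sb_bisimilar_stutter with vb t1; auto using taus_tau.
          exact (tau_path_taus _ _ _ Hp). }
        repeat split; eauto.
      * repeat split; eauto. intros Hb; rewrite Hb in Hx; discriminate.
    + simpl; destruct Hans as [Hex|[_ HB]]; [contradiction|now split].
  - intros [Huv [Hy _]] [n [_ [_ [[_ [t' [_ [HB ->]]]]|[m [v' [_ [_ [_ [Hm ->]]]]]]]]]];
      simpl; [now split|repeat split; eauto].
Qed.

Definition dup_choice_spec (d d' : conf) : Prop :=
  dup_response d d' \/ ((~ exists e, dup_response d e) /\ mv d d').

(** Off the invariant Duplicator plays an arbitrary legal move, so the strategy stays valid. *)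
Definition dup_choice (d : conf) : conf := epsilon (inhabits d) (dup_choice_spec d).

Lemma dup_choice_move d : (exists d', mv d d') -> mv d (dup_choice d).
Proof.
  intros [d' Hd'].
  destruct (epsilon_spec (inhabits d) (dup_choice_spec d)) as [H|[_ H]];
    [|now apply dup_response_move|exact H].
  destruct (classic (exists e, dup_response d e)) as [[e He]|He];
    [exists e; now left|exists d'; now right].
Qed.

Lemma dup_choice_response d : dup_inv d -> dup_response d (dup_choice d).
Proof.
  intros Hd; destruct (dup_response_exists d Hd) as [e He].
  destruct (epsilon_spec (inhabits d) (dup_choice_spec d)) as [H|[H _]];
    [exists e; now left|exact H|now exfalso; apply H; exists e].
Qed.

Section SilentTail.
Variable p : nat -> conf.
Hypothesis p_move : forall n, mv (p n) (p (S n)).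
Hypothesis p_dup : forall n, own St A (p n) = Duplicator -> p (S n) = dup_choice (p n).
Hypothesis p_inv : forall n, play_inv (p n).
Variable N : nat.
Hypothesis p_silent : forall n, N <= n -> rw St A (p n) = false.

Lemma dup_response_at n : own St A (p n) = Duplicator -> dup_response (p n) (p (S n)).
Proof.
  intros Ho; rewrite (p_dup n Ho).
  exact (dup_choice_response _ (play_inv_dup_inv _ Ho (p_inv n))).
Qed.

Lemma silent_challenge_repeated n pp a u' m r :
  N <= n -> p n = mkC Spoiler pp (Some (a,u')) m r ->
  p (S n) = mkC Duplicator pp (Some (a,u')) m false.
Proof.
  intros Hn Hp.
  destruct (spoiler_unrewarded_move _ _ _ (p_move n) ltac:(now rewrite Hp)
              (p_silent (S n) (le_S _ _ Hn))) as [[_ H]|[H _]]; rewrite Hp in H; [exact H|discriminate].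
Qed.

Lemma silent_clean_challenge n u v m r :
  N <= n -> p n = mkC Spoiler (u,v) None m r ->
  exists a u', step u a u' /\ p (S n) = mkC Duplicator (u,v) (Some (a,u')) (Some (v,Frown)) false.
Proof.
  intros Hn Hp.
  destruct (spoiler_unrewarded_move _ _ _ (p_move n) ltac:(now rewrite Hp)
              (p_silent (S n) (le_S _ _ Hn))) as [[H _]|[_ H]]; rewrite Hp in H; [now contradict H|exact H].
Qed.

Lemma silent_smile_phase k : forall n u v a u' vb r, N <= n ->
  p n = mkC Duplicator (u,v) (Some (a,u')) (Some (vb,Smile)) r -> ~ smile_answer u' vb k.
Proof.
  induction k as [k IH] using lt_wf_ind.
  intros n u v a u' vb r Hn Hp Hk.
  generalize (dup_response_at n); rewrite Hp; intros HR; specialize (HR eq_refl); simpl in HR.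
  destruct HR as [n0 [_ [Hmin [[_ [t' [_ [_ Hnext]]]]|[m [v' [-> [_ [_ [Hm Hnext]]]]]]]]]].
  - generalize (p_silent (S n) (le_S _ _ Hn)); rewrite Hnext; discriminate.
  - specialize (Hmin k Hk).
    exact (IH m ltac:(lia) (S (S n)) _ _ _ _ _ _ ltac:(lia)
             (silent_challenge_repeated (S n) _ _ _ _ _ (le_S _ _ Hn) Hnext) Hm).
Qed.

Lemma silent_frown_phase k : forall n u v a u' vb r, N <= n ->
  p n = mkC Duplicator (u,v) (Some (a,u')) (Some (vb,Frown)) r -> ~ frown_answer u a u' vb k.
Proof.
  induction k as [k IH] using lt_wf_ind.
  intros n u v a u' vb r Hn Hp Hk.
  generalize (dup_response_at n); rewrite Hp; intros HR; specialize (HR eq_refl); simpl in HR.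
  destruct HR as [[n0 [_ [Hmin Hd]]]|[Hnone _]]; [|apply Hnone; now exists k].
  specialize (Hmin k Hk).
  assert (Hrep := fun pp a u' m r => silent_challenge_repeated (S n) pp a u' m r (le_S _ _ Hn)).
  destruct Hd as [[_ [t2 [_ [_ Hnext]]]]|[[_ [_ [t2 [_ [[j Hj] Hnext]]]]]|
                  [m [v' [-> [_ [Hm [[_ Hnext]|[_ Hnext]]]]]]]]].
  - generalize (p_silent (S n) (le_S _ _ Hn)); rewrite Hnext; discriminate.
  - exact (silent_smile_phase j (S (S n)) _ _ _ _ _ _ ltac:(lia) (Hrep _ _ _ _ _ Hnext) Hj).
  - exact (IH m ltac:(lia) (S (S n)) _ _ _ _ _ _ ltac:(lia) (Hrep _ _ _ _ _ Hnext) Hm).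
  - exact (IH m ltac:(lia) (S (S n)) _ _ _ _ _ _ ltac:(lia) (Hrep _ _ _ _ _ Hnext) Hm).
Qed.

Lemma silent_dup_stays n : N <= n -> own St A (p n) = Duplicator ->
  exists u v u' vb r, p n = mkC Duplicator (u,v) (Some (tau,u')) (Some (vb,Frown)) r /\
    (forall k, ~ frown_answer u tau u' vb k) /\ p (S n) = mkC Spoiler (u',vb) None None false.
Proof.
  intros Hn Ho.
  pose proof (play_inv_dup_inv _ Ho (p_inv n)) as Hi; pose proof (dup_response_at n Ho) as HR.
  destruct (p n) as [[|] [u v] [[a u']|] [[vb [|]]|] r] eqn:Hp;
    simpl in Ho, Hi, HR; try discriminate; try contradiction.
  - destruct HR as [[k [Hk _]]|[Hnone [-> Hnext]]].
    + exfalso; exact (silent_frown_phase k n u v a u' vb r Hn Hp Hk).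
    + exists u, v, u', vb, r; split; [reflexivity|split; [|exact Hnext]].
      intros k Hk; apply Hnone; now exists k.
  - destruct Hi as [_ [_ [k Hk]]].
    exfalso; exact (silent_smile_phase k n u v a u' vb r Hn Hp Hk).
Qed.

Lemma silent_round n u v m r : N <= n -> p n = mkC Spoiler (u,v) None m r ->
  exists u', step u tau u' /\ (forall k, ~ frown_answer u tau u' v k) /\
    p (S (S n)) = mkC Spoiler (u',v) None None false.
Proof.
  intros Hn Hp.
  destruct (silent_clean_challenge n u v m r Hn Hp) as [a [u' [Hs Hnext]]].
  destruct (silent_dup_stays (S n)) as [u1 [v1 [u1' [vb [r1 [H1 [H2 H3]]]]]]];
    [lia|now rewrite Hnext|].
  rewrite Hnext in H1; injection H1 as -> -> -> -> ->.
  exists u1'; auto.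
Qed.

Lemma silent_clean_conf : exists M u v m r, N <= M /\ p M = mkC Spoiler (u,v) None m r.
Proof.
  assert (Hdup : forall n, N <= n -> own St A (p n) = Duplicator ->
            exists M u v m r, N <= M /\ p M = mkC Spoiler (u,v) None m r).
  { intros n Hn Ho; destruct (silent_dup_stays n Hn Ho) as [u1 [v1 [u1' [vb [r1 [_ [_ H]]]]]]].
    exists (S n), u1', vb, None, false; split; [lia|exact H]. }
  destruct (p N) as [[|] [u v] [[a u']|] m r] eqn:Hp.
  - apply (Hdup (S N)); [lia|now rewrite (silent_challenge_repeated N _ _ _ _ _ (le_n N) Hp)].
  - exists N, u, v, m, r; split; [lia|exact Hp].
  - apply (Hdup N); [lia|now rewrite Hp].
  - apply (Hdup N); [lia|now rewrite Hp].
Qed.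

Lemma diverging_frown_answer (f : nat -> St) v :
  (forall j, step (f j) tau (f (S j))) -> (forall j, B (f j) v) ->
  exists k n, frown_answer (f k) tau (f (S k)) v n.
Proof.
  intros Hf HB.
  destruct (proj2 (proj2 (semibranching_sb_bisimilar x y)) (f 1) v (HB 1)
              (fun j => f (S j)) eq_refl (fun j => Hf (S j))) as [t' [k [Ht' HBt']]].
  destruct (taus_plus_first _ _ Ht') as [t2 [Hv Ht2]].
  exists k, 0, v, t2; repeat split; auto.
  exists t'; repeat split; auto.
  intros _; apply sb_bisimilar_stutter with v t'; auto using taus_tau.
Qed.

(** Without rewards Duplicator can only answer silent challenges by staying put (D1), so
    Spoiler's side diverges against a fixed state [v]; its divergence condition then yields a
    move Duplicator should have answered instead. *)
Lemma silent_tail_absurd : False.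
Proof.
  destruct silent_clean_conf as [M [u0 [v [m0 [r0 [HM Hp]]]]]].
  assert (Hclean : forall j, exists u m r, p (M + 2 * j) = mkC Spoiler (u,v) None m r).
  { induction j as [|j [u [m [r Hu]]]].
    - exists u0, m0, r0; now rewrite Nat.add_0_r.
    - destruct (silent_round (M + 2 * j) _ _ _ _ ltac:(lia) Hu) as [u' [_ [_ Hnext]]].
      exists u', None, false.
      now replace (M + 2 * S j) with (S (S (M + 2 * j))) by lia. }
  set (f := fun j => fst (pos St A (p (M + 2 * j)))).
  assert (Hf : forall j, step (f j) tau (f (S j)) /\
                 (forall k, ~ frown_answer (f j) tau (f (S j)) v k) /\ B (f j) v).
  { intros j; destruct (Hclean j) as [u [m [r Hu]]].
    destruct (silent_round (M + 2 * j) _ _ _ _ ltac:(lia) Hu) as [u' [H1 [H2 H3]]].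
    unfold f; replace (M + 2 * S j) with (S (S (M + 2 * j))) by lia.
    rewrite Hu, H3; simpl; repeat split; auto.
    generalize (p_inv (M + 2 * j)); rewrite Hu; simpl; tauto. }
  destruct (diverging_frown_answer f v (fun j => proj1 (Hf j)) (fun j => proj2 (proj2 (Hf j))))
    as [k [n Hk]].
  exact (proj1 (proj2 (Hf k)) n Hk).
Qed.

End SilentTail.

Lemma play_inv_prefix (p : nat -> conf) k :
  play_inv (p 0) -> (forall n, n < k -> mv (p n) (p (S n))) ->
  (forall n, n < k -> own St A (p n) = Duplicator -> p (S n) = dup_choice (p n)) ->
  forall n, n <= k -> play_inv (p n).
Proof.
  intros H0 Hm Hc n; induction n as [|n IH]; intros Hn; [exact H0|].
  specialize (IH ltac:(lia)).
  destruct (own St A (p n)) eqn:Ho.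
  - exact (play_inv_spoiler_move _ _ IH Ho (Hm n ltac:(lia))).
  - rewrite (Hc n ltac:(lia) Ho).
    pose proof (play_inv_dup_inv _ Ho IH) as Hd.
    exact (play_inv_dup_response _ _ Hd (dup_choice_response _ Hd)).
Qed.

Lemma bisimilar_ed_game_equiv_ed s t :
  bisimilar_ed St A tau step x y s t -> game_equiv_ed St A tau step (Exy x y) s t.
Proof.
  intros [R [HR Hst]].
  set (c0 := mkC Spoiler (s,t) None None false).
  assert (Hc0 : play_inv c0).
  { split; [exists R; split; [now apply generic_bisim_ed_semibranching|exact Hst]|exact I]. }
  assert (Hcons : forall (p : nat -> conf) n, (own St A (p n) = Duplicator ->
            p (S n) = dup_choice (last (hist St A p n) c0)) ->
            own St A (p n) = Duplicator -> p (S n) = dup_choice (p n)).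
  { intros p n Hc Ho; rewrite (Hc Ho), hist_snoc, last_last; reflexivity. }
  exists (fun h => dup_choice (last h c0)); split; [|split].
  - intros h c _ Hex; rewrite last_last; exact (dup_choice_move c Hex).
  - intros p Hp0 Hm Hc N.
    assert (Hinv : forall n, play_inv (p n)).
    { intros n; apply (play_inv_prefix p n);
        [now rewrite Hp0|intros j _; apply Hm|intros j _; apply Hcons, Hc|lia]. }
    apply NNPP; intros Hnot.
    apply (silent_tail_absurd p Hm (fun n => Hcons p n (Hc n)) Hinv N).
    intros n Hn; destruct (rw St A (p n)) eqn:Hr; [exfalso; apply Hnot; eauto|reflexivity].
  - intros p k Hp0 Hm Hc Hstuck.
    assert (Hinv : play_inv (p k)).
    { apply (play_inv_prefix p k); [now rewrite Hp0|exact Hm|intros n Hn; apply Hcons, Hc, Hn|lia]. }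
    destruct (own St A (p k)) eqn:Ho; [reflexivity|exfalso].
    destruct (dup_response_exists _ (play_inv_dup_inv _ Ho Hinv)) as [d Hd].
    exact (Hstuck d (dup_response_move _ _ Hd)).
Qed.

End Forward.
(** * Bisimulations from winning strategies *)

Definition gb_transfer x y (R : St -> St -> Prop) s t a s' : Prop :=
  (a = tau /\ R s' t) \/
  (exists t1 t2 t', gtaus x R s t t1 /\ step t1 a t2 /\ gtaus y R s' t2 t' /\ R s' t').

Lemma gb_transfer_selfloop_taus_l x y (R : St -> St -> Prop) s q t a :
  R s q -> taus q t -> gb_transfer x y R s t a s -> gb_transfer x y R s q a s.
Proof.
  intros Hsq Hqt [[Ha _]|[t1 [t2 [t' [H1 H2]]]]]; [now left|right].
  exists t1, t2, t'; split; [eapply gtaus_taus_l; eauto|exact H2].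
Qed.

Lemma generic_bisim_ed_intro x y R :
  symmetric_rel St R ->
  (forall s t a s', R s t -> step s a s' -> gb_transfer x y R s t a s') ->
  (forall s t, R s t -> div_matched R s t) ->
  generic_bisim_ed St A tau step x y R.
Proof.
  intros Hsym Ht Hd; split; [split; [exact Hsym|]|exact Hd].
  intros s t a s' Hst Hs.
  destruct (Ht _ _ _ _ Hst Hs) as [H|[t1 [t2 [t' H]]]]; [now left|right; now exists t', t1, t2].
Qed.

Lemma hist_succ (p : nat -> conf) n :
  hist St A p (S n) = p 0 :: hist St A (fun i => p (S i)) n.
Proof. unfold hist; simpl; f_equal; now rewrite <- seq_shift, map_map. Qed.

Lemma play_exists (next : list conf -> conf) c :
  exists p : nat -> conf, p 0 = c /\ forall n, p (S n) = next (hist St A p n).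
Proof.
  set (h := fix h n := match n with 0 => [c] | S n => h n ++ [next (h n)] end).
  set (p := fun n => last (h n) c).
  assert (Hp : forall n, p (S n) = next (h n)) by (intros n; apply last_last).
  assert (Hh : forall n, h n = hist St A p n).
  { induction n as [|n IH]; [reflexivity|].
    change (h (S n)) with (h n ++ [next (h n)]).
    rewrite <- Hp, IH; unfold hist; now rewrite (seq_S (S n)), map_app. }
  exists p; split; [reflexivity|intros n; now rewrite Hp, Hh].
Qed.

Section Backward.
Variable E : Tag -> Prop.
Local Notation mv := (move St A tau step E).
Local Notation own := (own St A).
Local Notation rw := (rw St A).
Local Notation hist := (hist St A).
Local Notation winning_from := (winning_from St A tau step E).
Local Notation valid := (valid_strategy St A tau step E).

Lemma winning_from_ext (sg sg' : strategy St A) c :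
  (forall h, sg h = sg' h) -> winning_from sg c -> winning_from sg' c.
Proof.
  intros He [W1 W2]; split.
  - intros p Hp0 Hm Hc; apply W1; auto; intros n Ho; rewrite He; auto.
  - intros p k Hp0 Hm Hc; apply W2; auto; intros n Hn Ho; rewrite He; auto.
Qed.

Lemma winning_from_move (sg : strategy St A) c c' :
  winning_from sg c -> mv c c' -> (own c = Duplicator -> c' = sg [c]) ->
  winning_from (fun h => sg (c :: h)) c'.
Proof.
  intros [W1 W2] Hm Hc.
  split; intros p; set (q := fun i => match i with 0 => c | S i => p i end).
  - intros Hp0 Hmv Hcons N.
    destruct (W1 q eq_refl) with (N := S N) as [[|n] [Hn Hr]]; [| |lia|].
    + intros [|n]; unfold q; simpl; [now rewrite Hp0|apply Hmv].
    + intros [|n]; unfold q; simpl; intros Ho; [rewrite Hp0; exact (Hc Ho)|].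
      rewrite (Hcons n Ho), hist_succ; reflexivity.
    + exists n; split; [lia|exact Hr].
  - intros k Hp0 Hmv Hcons Hst; apply (W2 q (S k) eq_refl); [| |exact Hst].
    + intros [|n] Hn; unfold q; simpl; [now rewrite Hp0|apply Hmv; lia].
    + intros [|n] Hn; unfold q; simpl; intros Ho; [rewrite Hp0; exact (Hc Ho)|].
      rewrite (Hcons n ltac:(lia) Ho), hist_succ; reflexivity.
Qed.

Lemma valid_strategy_app (sg : strategy St A) l : valid sg -> valid (fun h => sg (l ++ h)).
Proof. intros Hv h c Ho Hm; rewrite app_assoc; now apply Hv. Qed.

Lemma winning_from_prefix (sg : strategy St A) (p : nat -> conf) n :
  winning_from sg (p 0) ->
  (forall m, m < n -> mv (p m) (p (S m))) ->
  (forall m, m < n -> own (p m) = Duplicator -> p (S m) = sg (hist p m)) ->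
  winning_from (fun h => sg (map p (seq 0 n) ++ h)) (p n).
Proof.
  intros W Hm Hc; induction n as [|n IH]; [exact W|].
  apply winning_from_ext with (fun h => sg (map p (seq 0 n) ++ p n :: h)).
  - intros h; now rewrite seq_S, map_app, <- app_assoc.
  - apply (winning_from_move (fun h => sg (map p (seq 0 n) ++ h)));
      [apply IH; auto|apply Hm; lia|].
    intros Ho; now rewrite (Hc n ltac:(lia) Ho), hist_snoc.
Qed.

Lemma winning_from_dup_can_move (sg : strategy St A) (p : nat -> conf) n :
  winning_from sg (p 0) ->
  (forall m, m < n -> mv (p m) (p (S m))) ->
  (forall m, m < n -> own (p m) = Duplicator -> p (S m) = sg (hist p m)) ->
  own (p n) = Duplicator -> exists c', mv (p n) c'.
Proof.
  intros [_ W2] Hm Hc Ho; apply NNPP; intros Hstuck.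
  rewrite (W2 p n eq_refl Hm Hc (fun c' H => Hstuck (ex_intro _ c' H))) in Ho; discriminate.
Qed.

Definition dup_wins (c : conf) : Prop := exists sg, valid sg /\ winning_from sg c.

Lemma dup_wins_play_prefix (sg : strategy St A) (p : nat -> conf) n :
  valid sg -> winning_from sg (p 0) ->
  (forall m, m < n -> mv (p m) (p (S m))) ->
  (forall m, m < n -> own (p m) = Duplicator -> p (S m) = sg (hist p m)) ->
  dup_wins (p n).
Proof.
  intros Hv W Hm Hc; exists (fun h => sg (map p (seq 0 n) ++ h)); split;
    [now apply valid_strategy_app|now apply winning_from_prefix].
Qed.

Lemma dup_wins_spoiler_move c c' : dup_wins c -> own c = Spoiler -> mv c c' -> dup_wins c'.
Proof.
  intros [sg [Hv W]] Ho Hm; exists (fun h => sg (c :: h)); split.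
  - exact (valid_strategy_app sg [c] Hv).
  - apply winning_from_move; [exact W|exact Hm|congruence].
Qed.

(** Otherwise Spoiler, playing against the winning strategy, keeps the play inside [P]
    without any further reward. *)
Lemma dup_wins_escape (P : conf -> Prop) (Q : Prop) :
  (forall c, P c -> dup_wins c -> own c = Spoiler ->
     exists c', mv c c' /\ rw c' = false /\ P c') ->
  (forall c c', P c -> own c = Duplicator -> mv c c' -> dup_wins c' ->
     Q \/ (rw c' = false /\ P c')) ->
  forall c, dup_wins c -> P c -> Q.
Proof.
  intros HS HD c [sg [Hv W]] Pc; apply NNPP; intros HQ.
  set (spoil := fun d => epsilon (inhabits d) (fun d' => mv d d' /\ rw d' = false /\ P d')).
  destruct (play_exists (fun h => let d := last h c in
                           match own d with Spoiler => spoil d | Duplicator => sg h end) c)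
    as [p [Hp0 Hp]].
  assert (Hnext : forall n, p (S n) = match own (p n) with
                                      | Spoiler => spoil (p n)
                                      | Duplicator => sg (hist p n) end)
    by (intros n; now rewrite Hp, hist_snoc, last_last, <- hist_snoc).
  assert (Hcons : forall n, own (p n) = Duplicator -> p (S n) = sg (hist p n))
    by (intros n Ho; now rewrite Hnext, Ho).
  assert (W0 : winning_from sg (p 0)) by now rewrite Hp0.
  assert (Hext : forall n, (forall m, m < n -> mv (p m) (p (S m))) -> mv (p n) (p (S n)) ->
            forall m, m < S n -> mv (p m) (p (S m))).
  { intros n Hm Hmv m Hm'; destruct (Nat.eq_dec m n) as [->|Hne]; [exact Hmv|apply Hm; lia]. }
  assert (Hwins : forall n, (forall m, m < n -> mv (p m) (p (S m))) -> dup_wins (p n))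
    by (intros n Hm; exact (dup_wins_play_prefix sg p n Hv W0 Hm (fun m _ => Hcons m))).
  assert (Hstep : forall n, (forall m, m < n -> mv (p m) (p (S m))) -> P (p n) ->
            mv (p n) (p (S n)) /\ rw (p (S n)) = false /\ P (p (S n))).
  { intros n Hm HP; destruct (own (p n)) eqn:Ho.
    - rewrite Hnext, Ho.
      apply (epsilon_spec (inhabits (p n)) (fun d' => mv (p n) d' /\ rw d' = false /\ P d')).
      exact (HS _ HP (Hwins n Hm) Ho).
    - assert (Hmv : mv (p n) (p (S n))).
      { rewrite (Hcons n Ho), hist_snoc; apply Hv; [exact Ho|].
        apply (winning_from_dup_can_move sg p n); auto. }
      split; [exact Hmv|].
      destruct (HD _ _ HP Ho Hmv (Hwins (S n) (Hext n Hm Hmv))) as [HQ'|H];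
        [contradiction|exact H]. }
  assert (Hall : forall n, (forall m, m < n -> mv (p m) (p (S m))) /\ P (p n)).
  { induction n as [|n [Hm HP]]; [split; [intros; lia|now rewrite Hp0]|].
    destruct (Hstep n Hm HP) as [H1 [_ H3]]; split; [exact (Hext n Hm H1)|exact H3]. }
  destruct (proj1 W p Hp0 (fun n => proj1 (Hstep n (proj1 (Hall n)) (proj2 (Hall n)))) Hcons 1)
    as [[|n] [Hn Hr]]; [lia|].
  rewrite (proj1 (proj2 (Hstep n (proj1 (Hall n)) (proj2 (Hall n))))) in Hr; discriminate.
Qed.

Lemma spoiler_repeats_challenge (P : conf -> Prop) c :
  own c = Spoiler -> cc St A c <> None ->
  P (mkC Duplicator (pos St A c) (cc St A c) (mm St A c) false) ->
  exists c', mv c c' /\ rw c' = false /\ P c'.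
Proof.
  destruct c as [o p0 c0 m0 r0]; simpl; intros -> Hc HP.
  eexists; split; [apply mvS1; exact Hc|split; [reflexivity|exact HP]].
Qed.

Lemma duplicator_move_cases U V a u' vb f r c' :
  mv (mkC Duplicator (U,V) (Some (a,u')) (Some (vb,f)) r) c' ->
  (a = tau /\ c' = mkC Spoiler (u',vb) None None false) \/
  (f = Frown /\ exists v', step vb a v' /\
     (c' = mkC Spoiler (u',v') (Some (a,u')) (Some (v',Smile)) false \/
      c' = mkC Spoiler (u',v') None None true \/
      (E Smile /\ c' = mkC Spoiler (U,V) (Some (a,u')) (Some (v',Smile)) false))) \/
  (exists v', step vb tau v' /\
     (c' = mkC Spoiler (U,v') (Some (a,u')) (Some (v',f)) false \/
      (f = Smile /\ c' = mkC Spoiler (u',v') None None true) \/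
      (E f /\ c' = mkC Spoiler (U,V) (Some (a,u')) (Some (v',f)) false))).
Proof.
  intros H; inversion H; subst; [now left| | | | | |];
    [right; left; split; [reflexivity|]..|right; right|right; right|right; right];
    eexists; (split; [eassumption|]); auto.
Qed.

End Backward.

Section GameRelation.
Variables x y : Mode.
Local Notation mv := (move St A tau step (Exy x y)).
Local Notation dup_wins := (dup_wins (Exy x y)).

(** The Spoiler configurations at [(s,t)] in which a round of the game can end. *)
Definition dup_wins_from s t : Prop :=
  (exists m r, dup_wins (mkC Spoiler (s,t) None m r)) \/
  (exists a s1 r, step s a s1 /\
     dup_wins (mkC Spoiler (s,t) (Some (a,s1)) (Some (t,Frown)) r)) \/
  (exists a r, dup_wins (mkC Spoiler (s,t) (Some (a,s)) (Some (t,Smile)) r)).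

Definition game_rel s t : Prop := dup_wins_from s t \/ dup_wins_from t s.

Lemma game_rel_clean s t m r : dup_wins (mkC Spoiler (s,t) None m r) -> game_rel s t.
Proof. intros G; left; left; eauto. Qed.

Lemma game_rel_frown s t a s1 r :
  step s a s1 -> dup_wins (mkC Spoiler (s,t) (Some (a,s1)) (Some (t,Frown)) r) -> game_rel s t.
Proof. intros Hs G; left; right; left; eauto. Qed.

Lemma game_rel_smile s t a r :
  dup_wins (mkC Spoiler (s,t) (Some (a,s)) (Some (t,Smile)) r) -> game_rel s t.
Proof. intros G; left; right; right; eauto. Qed.

Lemma gb_transfer_intro (R : St -> St -> Prop) s t a s' t1 t2 t' :
  R s t -> taus t t1 -> (x = b -> R s t1) -> step t1 a t2 ->
  taus t2 t' -> (y = b -> R s' t2) -> R s' t' -> gb_transfer x y R s t a s'.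
Proof.
  intros Hst H1 Hx H2 H3 Hy H4; right; exists t1, t2, t'.
  repeat split; [apply gtaus_intro; auto|exact H2|apply gtaus_intro; auto|exact H4].
Qed.

Definition frown_progress u v vb : Prop :=
  taus v vb /\ (x = b -> game_rel u vb) /\
  (vb = v \/ exists vl, taus v vl /\ step vl tau vb /\ (x = b -> game_rel u vl)).

Definition smile_progress u v a u' vb : Prop :=
  exists t1 t2, taus v t1 /\ (x = b -> game_rel u t1) /\ step t1 a t2 /\ taus t2 vb /\
    (y = b -> game_rel u' t2).

(** Answering [u -a-> u'] from [v], Duplicator has so far moved silently from [v] to [vb]
    (frown), or has already matched [a] by [t1 -a-> t2] and moves silently from [t2] (smile). *)
Definition answer_phase u v a u' (c : conf) : Prop :=
  cc St A c = Some (a,u') /\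
  ((exists vb, mm St A c = Some (vb,Frown) /\ fst (pos St A c) = u /\ frown_progress u v vb) \/
   (exists vb, mm St A c = Some (vb,Smile) /\ smile_progress u v a u' vb)).

Lemma answer_frown_move u v a u' V vb r c' :
  step u a u' -> game_rel u v -> frown_progress u v vb ->
  mv (mkC Duplicator (u,V) (Some (a,u')) (Some (vb,Frown)) r) c' -> dup_wins c' ->
  gb_transfer x y game_rel u v a u' \/ (rw St A c' = false /\ answer_phase u v a u' c').
Proof.
  intros Hs Huv [Hv [Hx Hl]] Hm G.
  assert (Hsmile : forall v', step vb a v' -> (y = b -> game_rel u' v') ->
            smile_progress u v a u' v') by (intros v' Hs' Hy; exists vb, v'; repeat split; auto; constructor).
  assert (Hfrown : forall v', step vb tau v' -> (x = b -> game_rel u v') -> frown_progress u v v')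
    by (intros v' Hs' Hx'; repeat split; eauto using taus_trans, taus_tau).
  destruct (duplicator_move_cases _ _ _ _ _ _ _ _ _ Hm)
    as [[-> ->]|[[_ [v' [Hs' [->|[->|[HE ->]]]]]]|[v' [Hs' [->|[[Hf _]|[HE ->]]]]]]].
  - left; destruct Hl as [->|[vl [H1 [H2 H3]]]].
    + left; split; [reflexivity|exact (game_rel_clean _ _ _ _ G)].
    + pose proof (game_rel_clean _ _ _ _ G).
      apply (gb_transfer_intro _ _ _ _ _ vl vb vb); auto; constructor.
  - right; split; [reflexivity|split; [reflexivity|right; exists v'; split; [reflexivity|]]].
    exact (Hsmile v' Hs' (fun _ => game_rel_smile _ _ _ _ G)).
  - pose proof (game_rel_clean _ _ _ _ G).
    left; apply (gb_transfer_intro _ _ _ _ _ vb v' v'); auto; constructor.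
  - right; split; [reflexivity|split; [reflexivity|right; exists v'; split; [reflexivity|]]].
    apply Hsmile; [exact Hs'|intros Hb; simpl in HE; congruence].
  - right; split; [reflexivity|split; [reflexivity|left; exists v'; split; [reflexivity|]]].
    split; [reflexivity|exact (Hfrown v' Hs' (fun _ => game_rel_frown _ _ _ _ _ Hs G))].
  - discriminate.
  - right; split; [reflexivity|split; [reflexivity|left; exists v'; split; [reflexivity|]]].
    split; [reflexivity|apply Hfrown; [exact Hs'|intros Hb; simpl in HE; congruence]].
Qed.

Lemma answer_smile_move u v a u' U V vb r c' :
  game_rel u v -> smile_progress u v a u' vb ->
  mv (mkC Duplicator (U,V) (Some (a,u')) (Some (vb,Smile)) r) c' -> dup_wins c' ->
  gb_transfer x y game_rel u v a u' \/ (rw St A c' = false /\ answer_phase u v a u' c').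
Proof.
  intros Huv [t1 [t2 [H1 [H2 [H3 [H4 H5]]]]]] Hm G.
  assert (Hv' : forall v', step vb tau v' -> taus t2 v')
    by (intros v' Hs'; exact (taus_trans _ _ _ H4 (taus_tau _ _ Hs'))).
  assert (Hsmile : forall v', step vb tau v' -> smile_progress u v a u' v')
    by (intros v' Hs'; exists t1, t2; repeat split; auto).
  destruct (duplicator_move_cases _ _ _ _ _ _ _ _ _ Hm)
    as [[_ ->]|[[Hf _]|[v' [Hs' [->|[[_ ->]|[_ ->]]]]]]].
  - pose proof (game_rel_clean _ _ _ _ G).
    left; apply (gb_transfer_intro _ _ _ _ _ t1 t2 vb); auto.
  - discriminate.
  - right; split; [reflexivity|split; [reflexivity|right; exists v'; auto]].
  - pose proof (game_rel_clean _ _ _ _ G).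
    left; apply (gb_transfer_intro _ _ _ _ _ t1 t2 v'); auto.
  - right; split; [reflexivity|split; [reflexivity|right; exists v'; auto]].
Qed.

Lemma game_rel_answer u v a u' r :
  step u a u' -> game_rel u v ->
  dup_wins (mkC Duplicator (u,v) (Some (a,u')) (Some (v,Frown)) r) ->
  gb_transfer x y game_rel u v a u'.
Proof.
  intros Hs Huv G.
  refine (dup_wins_escape _ (answer_phase u v a u') _ _ _ _ G _).
  - intros c [Hc Hph] _ Ho.
    apply spoiler_repeats_challenge; [exact Ho|congruence|split; [exact Hc|exact Hph]].
  - intros [[|] [U V] cc0 mm0 r0] c' [Hc Hph] Ho Hm G'; simpl in Ho, Hc, Hph;
      [discriminate|subst cc0].
    destruct Hph as [[vb [-> [-> Hp]]]|[vb [-> Hp]]].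
    + exact (answer_frown_move _ _ _ _ _ _ _ _ Hs Huv Hp Hm G').
    + exact (answer_smile_move _ _ _ _ _ _ _ _ _ Huv Hp Hm G').
  - split; [reflexivity|left; exists v; repeat split; auto; constructor].
Qed.

Lemma smile_selfloop_clean s t a r :
  dup_wins (mkC Spoiler (s,t) (Some (a,s)) (Some (t,Smile)) r) ->
  exists v m r', taus t v /\ dup_wins (mkC Spoiler (s,v) None m r').
Proof.
  intros G.
  refine (dup_wins_escape _ (fun c => cc St A c = Some (a,s) /\
                                     exists vb, mm St A c = Some (vb,Smile) /\ taus t vb)
           _ _ _ _ G _).
  - intros c [Hc HP] _ Ho.
    apply spoiler_repeats_challenge; [exact Ho|congruence|split; [exact Hc|exact HP]].
  - intros [[|] [U V] cc0 mm0 r0] c' [Hc [vb [Hmm Hv]]] Ho Hm G'; simpl in Ho, Hc, Hmm;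
      [discriminate|subst cc0 mm0].
    assert (Hv' : forall v', step vb tau v' -> taus t v')
      by (intros v' Hs'; exact (taus_trans _ _ _ Hv (taus_tau _ _ Hs'))).
    destruct (duplicator_move_cases _ _ _ _ _ _ _ _ _ Hm)
      as [[_ ->]|[[Hf _]|[v' [Hs' [->|[[_ ->]|[_ ->]]]]]]].
    + left; now exists vb, None, false.
    + discriminate.
    + right; split; [reflexivity|split; [reflexivity|exists v'; auto]].
    + left; exists v', None, true; auto.
    + right; split; [reflexivity|split; [reflexivity|exists v'; auto]].
  - split; [reflexivity|exists t; split; [reflexivity|constructor]].
Qed.

Lemma dup_wins_open_challenge s t cc0 mm0 r a s' :
  dup_wins (mkC Spoiler (s,t) cc0 mm0 r) -> step s a s' ->
  (cc0 = Some (a,s') -> mm0 = Some (t,Frown)) ->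
  exists r', dup_wins (mkC Duplicator (s,t) (Some (a,s')) (Some (t,Frown)) r').
Proof.
  intros G Hs Hcc.
  destruct (classic (cc0 = Some (a,s'))) as [Heq|Hne].
  - exists false; rewrite <- Heq, <- (Hcc Heq).
    apply (dup_wins_spoiler_move _ _ _ G eq_refl), mvS1; congruence.
  - destruct cc0 as [c0|].
    + exists true; apply (dup_wins_spoiler_move _ _ _ G eq_refl), mvS2b; assumption.
    + exists false; apply (dup_wins_spoiler_move _ _ _ G eq_refl), mvS2a; assumption.
Qed.

Lemma dup_wins_spoiler_transfer s t cc0 mm0 r a s' :
  dup_wins (mkC Spoiler (s,t) cc0 mm0 r) -> game_rel s t -> step s a s' ->
  (cc0 = Some (a,s') -> mm0 = Some (t,Frown)) -> gb_transfer x y game_rel s t a s'.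
Proof.
  intros G Hst Hs Hcc; destruct (dup_wins_open_challenge _ _ _ _ _ _ _ G Hs Hcc) as [r' G'].
  exact (game_rel_answer _ _ _ _ _ Hs Hst G').
Qed.

Lemma dup_wins_from_transfer s t a s' :
  dup_wins_from s t -> step s a s' -> gb_transfer x y game_rel s t a s'.
Proof.
  intros Hw Hs; assert (Hst : game_rel s t) by now left.
  destruct Hw as [[m [r G]]|[[a1 [s1 [r [_ G]]]]|[a1 [r G]]]].
  - exact (dup_wins_spoiler_transfer _ _ _ _ _ _ _ G Hst Hs ltac:(discriminate)).
  - exact (dup_wins_spoiler_transfer _ _ _ _ _ _ _ G Hst Hs (fun _ => eq_refl)).
  - destruct (classic ((a,s') = (a1,s))) as [Heq|Hne].
    + injection Heq as -> ->.
      destruct (smile_selfloop_clean _ _ _ _ G) as [v [m [r' [Htv G']]]].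
      apply gb_transfer_selfloop_taus_l with v; [exact Hst|exact Htv|].
      exact (dup_wins_spoiler_transfer _ _ _ _ _ _ _ G' (game_rel_clean _ _ _ _ G') Hs
               ltac:(discriminate)).
    + exact (dup_wins_spoiler_transfer _ _ _ _ _ _ _ G Hst Hs ltac:(congruence)).
Qed.

Lemma dup_wins_from_sym_challenge s t a s' :
  dup_wins_from t s -> step s a s' ->
  dup_wins (mkC Duplicator (s,t) (Some (a,s')) (Some (t,Frown)) true).
Proof.
  intros Hw Hs.
  assert (Hspoiler : exists cc0 mm0 r, dup_wins (mkC Spoiler (t,s) cc0 mm0 r))
    by (destruct Hw as [[m [r G]]|[[a1 [s1 [r [_ G]]]]|[a1 [r G]]]]; eauto).
  destruct Hspoiler as [cc0 [mm0 [r G]]].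
  exact (dup_wins_spoiler_move _ _ _ G eq_refl (mvS3 _ _ _ _ _ _ _ _ _ _ _ _ Hs)).
Qed.

(** Spoiler runs along the divergence [f], challenging with each [f j -tau-> f (S j)], while
    Duplicator moves silently from [t] to [vb]. *)
Definition div_chase (f : nat -> St) t (c : conf) : Prop :=
  exists j vb, taus t vb /\
    ((own St A c = Spoiler /\ cc St A c = None /\ pos St A c = (f j, vb)) \/
     (cc St A c = Some (tau, f (S j)) /\
      (mm St A c = Some (vb,Frown) \/ (mm St A c = Some (vb,Smile) /\ taus_plus t vb)))).

Lemma div_chase_dup_move (f : nat -> St) t c c' :
  div_chase f t c -> own St A c = Duplicator -> mv c c' -> dup_wins c' ->
  (exists t' k, taus_plus t t' /\ game_rel (f k) t') \/ (rw St A c' = false /\ div_chase f t c').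
Proof.
  intros [j [vb [Hv [[Ho' _]|[Hc Hm0]]]]] Ho Hm G; [congruence|].
  destruct c as [o [U V] cc0 mm0 r0]; simpl in Ho, Hc, Hm0; subst o cc0.
  assert (Hfl : exists fl, mm0 = Some (vb,fl) /\ (fl = Smile -> taus_plus t vb))
    by (destruct Hm0 as [->|[-> H]]; [exists Frown; split; [reflexivity|discriminate]|eauto]).
  destruct Hfl as [fl [-> Hfl]].
  assert (Hplus : forall v', step vb tau v' -> taus_plus t v')
    by (intros v' Hs; eapply taus_taus_plus; [exact Hv|constructor; exact Hs]).
  assert (Hkeep : forall P' v' fl', step vb tau v' ->
            div_chase f t (mkC Spoiler P' (Some (tau, f (S j))) (Some (v',fl')) false)).
  { intros P' v' fl' Hs; exists j, v'; split; [exact (taus_plus_taus _ _ (Hplus v' Hs))|right].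
    split; [reflexivity|destruct fl'; [now left|right; split; [reflexivity|exact (Hplus v' Hs)]]]. }
  destruct (duplicator_move_cases _ _ _ _ _ _ _ _ _ Hm)
    as [[_ ->]|[[_ [v' [Hs' [->|[->|[_ ->]]]]]]|[v' [Hs' [->|[[_ ->]|[_ ->]]]]]]];
    try (left; exists v', (S j); split; [exact (Hplus v' Hs')|exact (game_rel_clean _ _ _ _ G)]);
    right; split; auto.
  exists (S j), vb; split; [exact Hv|left; auto].
Qed.

Lemma dup_wins_challenge_div (f : nat -> St) t r :
  (forall n, step (f n) tau (f (S n))) ->
  dup_wins (mkC Duplicator (f 0, t) (Some (tau, f 1)) (Some (t,Frown)) r) ->
  exists t' k, taus_plus t t' /\ game_rel (f k) t'.
Proof.
  intros Hf G.
  refine (dup_wins_escape _ (div_chase f t) _ _ (div_chase_dup_move f t) _ G _).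
  - intros c [j [vb [Hv [[_ [Hc Hp]]|[Hc Hm]]]]] _ Ho.
    + destruct c as [o pp cc0 mm0 r0]; simpl in Ho, Hc, Hp; subst o pp cc0.
      eexists; split; [apply mvS2a, (Hf j)|split; [reflexivity|]].
      exists j, vb; split; [exact Hv|right; simpl; auto].
    + apply spoiler_repeats_challenge; [exact Ho|congruence|].
      exists j, vb; split; [exact Hv|right; simpl; auto].
  - exists 0, t; split; [constructor|right; simpl; auto].
Qed.

Lemma dup_wins_spoiler_div s t cc0 mm0 r :
  dup_wins (mkC Spoiler (s,t) cc0 mm0 r) ->
  (forall s1, cc0 = Some (tau,s1) -> mm0 = Some (t,Frown)) -> div_matched game_rel s t.
Proof.
  intros G Hcc f Hf0 Hf; subst s.
  destruct (dup_wins_open_challenge _ _ _ _ _ _ _ G (Hf 0) (Hcc (f 1))) as [r' G'].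
  exact (dup_wins_challenge_div f t r' Hf G').
Qed.

Lemma dup_wins_from_div s t : dup_wins_from s t -> div_matched game_rel s t.
Proof.
  intros [[m [r G]]|[[a1 [s1 [r [_ G]]]]|[a1 [r G]]]].
  - exact (dup_wins_spoiler_div _ _ _ _ _ G ltac:(discriminate)).
  - exact (dup_wins_spoiler_div _ _ _ _ _ G (fun _ _ => eq_refl)).
  - destruct (smile_selfloop_clean _ _ _ _ G) as [v [m [r' [Htv G']]]].
    exact (div_matched_taus_l _ _ _ _ Htv (dup_wins_spoiler_div _ _ _ _ _ G' ltac:(discriminate))).
Qed.

Lemma game_rel_generic_bisim_ed : generic_bisim_ed St A tau step x y game_rel.
Proof.
  apply generic_bisim_ed_intro.
  - intros s t [H|H]; [right|left]; exact H.
  - intros s t a s' [H|H] Hs; [exact (dup_wins_from_transfer _ _ _ _ H Hs)|].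
    exact (game_rel_answer _ _ _ _ _ Hs (or_intror H) (dup_wins_from_sym_challenge _ _ _ _ H Hs)).
  - intros s t [H|H]; [exact (dup_wins_from_div _ _ H)|].
    intros f Hf0 Hf; subst s.
    exact (dup_wins_challenge_div f t true Hf (dup_wins_from_sym_challenge _ _ _ _ H (Hf 0))).
Qed.

Lemma game_equiv_ed_bisimilar_ed s t :
  game_equiv_ed St A tau step (Exy x y) s t -> bisimilar_ed St A tau step x y s t.
Proof.
  intros G; exists game_rel.
  split; [exact game_rel_generic_bisim_ed|exact (game_rel_clean _ _ _ _ G)].
Qed.

End GameRelation.

End GenericBisimulationGame.

Theorem theorem6p10 (St A : Type) (tau : A) (step : St -> A -> St -> Prop)
  (x y : Mode) (s t : St) :
  bisimilar_ed St A tau step x y s t <-> game_equiv_ed St A tau step (Exy x y) s t.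
Proof.
  split; [apply bisimilar_ed_game_equiv_ed|apply game_equiv_ed_bisimilar_ed].
Qed.
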